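(* Let $h>0$, $P\ge 0$, $0<\zeta\le 1$, $\sigma_A^2\ge 0$, $\sigma_{\rm cov}^2>0$, and let $N\ge 1$ be an integer. Define, for $\rho\in[0,1]$, $$f(\rho)=\log_2\!\left(1+\frac{(1-\rho)hP}{(1-\rho)\sigma_A^2+\sigma_{\rm cov}^2}\right).$$ Define the dynamic power splitting (DPS) region $$\mathcal{C}^{\rm DPS}(P)=\bigcup_{\boldsymbol\rho=(\rho_1,\dots,\rho_N)\in[0,1]^N}\Big\{(R,Q)\in\mathbb{R}^2:\ Q\le \tfrac1N\sum_{k=1}^N\rho_k\zeta hP,\ \ R\le \tfrac1N\sum_{k=1}^N f(\rho_k)\Big\}$$ and the static power splitting (SPS) region $$\mathcal{C}^{\rm SPS}(P)=\bigcup_{\rho\in[0,1]}\Big\{(R,Q)\in\mathbb{R}^2:\ Q\le \rho\zeta hP,\ \ R\le f(\rho)\Big\}.$$ Then $\mathcal{C}^{\rm DPS}(P)=\mathcal{C}^{\rm SPS}(P)$ for every $P\ge 0$.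
   Context: This models a separated information/energy receiver: in symbol $k$ of a block of $N$ symbols, a fraction $\rho_k$ of the received power $hP$ (channel gain $h$, transmit power $P$) is sent to an energy harvester with conversion efficiency $\zeta$, and the fraction $1-\rho_k$ to an information decoder whose rate is $f(\rho_k)$; $\sigma_A^2$ is antenna noise power and $\sigma_{\rm cov}^2$ is RF-to-baseband conversion noise power. SPS is the special case $\rho_k=\rho$ for all $k$. *)

From Stdlib Require Import Reals.
Open Scope R_scope.

Definition log2 (x : R) : R := ln x / ln 2.

Definition frate (h P sA2 scov2 rho : R) : R :=
  log2 (1 + ((1 - rho) * h * P) / ((1 - rho) * sA2 + scov2)).

Fixpoint sumN (n : nat) (g : nat -> R) : R :=
  match n with
  | O => 0
  | S m => sumN m g + g m
  end.

(* DPS region: rho is a vector (rho_0,...,rho_{N-1}) with entries in [0,1]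
   (only the first N entries of the function matter). *)
Definition C_DPS (N : nat) (h P zeta sA2 scov2 : R) (RQ : R * R) : Prop :=
  exists rho : nat -> R,
    (forall k, (k < N)%nat -> 0 <= rho k <= 1) /\
    snd RQ <= / INR N * sumN N (fun k => rho k * zeta * h * P) /\
    fst RQ <= / INR N * sumN N (fun k => frate h P sA2 scov2 (rho k)).

Definition C_SPS (h P zeta sA2 scov2 : R) (RQ : R * R) : Prop :=
  exists rho : R,
    0 <= rho <= 1 /\
    snd RQ <= rho * zeta * h * P /\
    fst RQ <= frate h P sA2 scov2 rho.

From Stdlib Require Import Reals Lra Lia.
Open Scope R_scope.

(* Static splitting is the special case of dynamic splitting
   with a constant vector, so C_SPS is contained in C_DPS.  Conversely,
   given a DPS vector rho, take the static ratio mu := mean of the rho_k.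
   The harvested power is linear in rho, so its average equals mu*zeta*h*P.
   The rate f is concave on [0,1]: it lies below a supporting line at
   every point mu.  Averaging this inequality over k (a finite Jensen
   inequality) gives (1/N) sum_k f(rho_k) <= f(mu). *)

Lemma sumN_ext (n : nat) (f g : nat -> R) :
  (forall k, (k < n)%nat -> f k = g k) -> sumN n f = sumN n g.
Proof.
  induction n as [|n IH]; intros Hfg; cbn [sumN]; [reflexivity|].
  rewrite IH, (Hfg n); [reflexivity | lia | intros; apply Hfg; lia].
Qed.

Lemma sumN_le (n : nat) (f g : nat -> R) :
  (forall k, (k < n)%nat -> f k <= g k) -> sumN n f <= sumN n g.
Proof.
  induction n as [|n IH]; intros Hfg; cbn [sumN]; [lra|].
  assert (sumN n f <= sumN n g) by (apply IH; intros; apply Hfg; lia).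
  pose proof (Hfg n ltac:(lia)). lra.
Qed.

Lemma sumN_affine (n : nat) (f : nat -> R) (c d : R) :
  sumN n (fun k => c + d * f k) = INR n * c + d * sumN n f.
Proof. induction n as [|n IH]; cbn [sumN]; [simpl; ring|]. rewrite IH, S_INR. ring. Qed.

Lemma sumN_bounds (n : nat) (f : nat -> R) :
  (forall k, (k < n)%nat -> 0 <= f k <= 1) -> 0 <= sumN n f <= INR n.
Proof.
  induction n as [|n IH]; intros Hf; cbn [sumN]; [simpl; lra|].
  assert (0 <= sumN n f <= INR n) by (apply IH; intros; apply Hf; lia).
  pose proof (Hf n ltac:(lia)). rewrite S_INR. lra.
Qed.

Definition mean (n : nat) (x : nat -> R) : R := / INR n * sumN n x.

Section Mean.
Variable n : nat.
Hypothesis n_pos : (1 <= n)%nat.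

Let INR_n_pos : 0 < INR n.
Proof. apply lt_0_INR; lia. Qed.

Lemma mean_ext (x y : nat -> R) :
  (forall k, (k < n)%nat -> x k = y k) -> mean n x = mean n y.
Proof. intros Hxy. unfold mean. rewrite (sumN_ext n x y Hxy). reflexivity. Qed.

Lemma mean_le (x y : nat -> R) :
  (forall k, (k < n)%nat -> x k <= y k) -> mean n x <= mean n y.
Proof.
  intros Hxy. unfold mean. apply Rmult_le_compat_l.
  - left; apply Rinv_0_lt_compat; exact INR_n_pos.
  - exact (sumN_le n x y Hxy).
Qed.

Lemma mean_affine (x : nat -> R) (c d : R) :
  mean n (fun k => c + d * x k) = c + d * mean n x.
Proof. unfold mean. rewrite sumN_affine. field. lra. Qed.

Lemma mean_const (c : R) : mean n (fun _ => c) = c.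
Proof.
  rewrite (mean_ext (fun _ => c) (fun k => c + 0 * 0)) by (intros; ring).
  rewrite mean_affine. ring.
Qed.

Lemma mean_in_unit (x : nat -> R) :
  (forall k, (k < n)%nat -> 0 <= x k <= 1) -> 0 <= mean n x <= 1.
Proof.
  intros Hx. pose proof (sumN_bounds n x Hx) as [H0 H1]. unfold mean. split.
  - apply Rmult_le_pos; [left; apply Rinv_0_lt_compat|]; lra.
  - apply (Rmult_le_reg_l (INR n)); [exact INR_n_pos|].
    rewrite <- Rmult_assoc, Rinv_r; lra.
Qed.

Lemma mean_le_of_supporting_line (g : R -> R) (x : nat -> R) (K : R) :
  (forall k, (k < n)%nat -> g (x k) <= g (mean n x) + K * (x k - mean n x)) ->
  mean n (fun k => g (x k)) <= g (mean n x).
Proof.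
  intros Hsupp. set (m := mean n x) in *.
  apply Rle_trans with (mean n (fun k => (g m - K * m) + K * x k)).
  - apply mean_le. intros k Hk. specialize (Hsupp k Hk). lra.
  - rewrite mean_affine. fold m. lra.
Qed.

End Mean.

Lemma ln_le_tangent (y y0 : R) : 0 < y -> 0 < y0 -> ln y <= ln y0 + (y - y0) / y0.
Proof.
  intros Hy Hy0.
  assert (Hq : 0 < y / y0) by (apply Rdiv_lt_0_compat; lra).
  pose proof (exp_ineq1_le (ln (y / y0))) as Hexp. rewrite exp_ln in Hexp by exact Hq.
  replace y with (y / y0 * y0) at 1 by (field; lra).
  rewrite ln_mult by lra.
  replace ((y - y0) / y0) with (y / y0 - 1) by (field; lra). lra.
Qed.

(* Received SNR gain 1 + (1-x)a/((1-x)b+c) when a fraction 1-x of the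
   signal power a reaches the decoder with antenna noise b and conversion
   noise c; the rate is log2 of it. *)
Definition gain (a b c x : R) : R := 1 + (1 - x) * a / ((1 - x) * b + c).

Lemma frate_gain (h P sA2 scov2 x : R) :
  frate h P sA2 scov2 x = ln (gain (h * P) sA2 scov2 x) / ln 2.
Proof. unfold frate, gain, log2. rewrite Rmult_assoc. reflexivity. Qed.

Section Gain.
Variables a b c : R.
Hypotheses (a_nonneg : 0 <= a) (b_nonneg : 0 <= b) (c_pos : 0 < c).

Let denom_pos (x : R) : x <= 1 -> 0 < (1 - x) * b + c.
Proof. intros Hx. nra. Qed.

Lemma gain_ge1 (x : R) : x <= 1 -> 1 <= gain a b c x.
Proof.
  intros Hx. unfold gain.
  assert (0 <= (1 - x) * a / ((1 - x) * b + c)).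
  { apply Rmult_le_pos; [nra | left; apply Rinv_0_lt_compat, denom_pos; exact Hx]. }
  lra.
Qed.

(* The gain is concave on (-oo,1]: it lies below its tangent line at m,
   whose slope is -ac/((1-m)b+c)^2.  The gap is a nonnegative multiple of
   (x - m)^2. *)
Lemma gain_le_tangent (x m : R) : x <= 1 -> m <= 1 ->
  gain a b c x <= gain a b c m - a * c / ((1 - m) * b + c) ^ 2 * (x - m).
Proof.
  intros Hx Hm. pose proof (denom_pos x Hx) as Dx. pose proof (denom_pos m Hm) as Dm.
  set (Bx := (1 - x) * b + c) in *. set (Bm := (1 - m) * b + c) in *.
  assert (Hgap : gain a b c m - a * c / Bm ^ 2 * (x - m) - gain a b c x
                 = a * b * c * (x - m) ^ 2 / (Bx * Bm ^ 2)).
  { unfold gain, Bx, Bm in *. field. lra. }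
  assert (0 <= a * b * c * (x - m) ^ 2 / (Bx * Bm ^ 2)).
  { apply Rmult_le_pos.
    - apply Rmult_le_pos; [repeat apply Rmult_le_pos; lra | apply pow2_ge_0].
    - left; apply Rinv_0_lt_compat, Rmult_lt_0_compat; [exact Dx | apply pow_lt, Dm]. }
  lra.
Qed.

(* ln of the gain lies below a line through its value at m: compose the
   tangent of ln at gain m with the tangent of the gain at m. *)
Lemma ln_gain_supporting_line (m : R) : m <= 1 ->
  exists K, forall x, x <= 1 -> ln (gain a b c x) <= ln (gain a b c m) + K * (x - m).
Proof.
  intros Hm. pose proof (gain_ge1 m Hm) as Gm. pose proof (denom_pos m Hm) as Dm.
  exists (- (a * c / ((1 - m) * b + c) ^ 2) / gain a b c m).
  intros x Hx. pose proof (gain_ge1 x Hx) as Gx.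
  pose proof (ln_le_tangent (gain a b c x) (gain a b c m) ltac:(lra) ltac:(lra)) as Hln.
  pose proof (gain_le_tangent x m Hx Hm) as Htan.
  assert ((gain a b c x - gain a b c m) / gain a b c m
          <= - (a * c / ((1 - m) * b + c) ^ 2) / gain a b c m * (x - m)).
  { replace (- (a * c / ((1 - m) * b + c) ^ 2) / gain a b c m * (x - m))
      with ((- (a * c / ((1 - m) * b + c) ^ 2) * (x - m)) / gain a b c m) by (field; split; lra).
    apply Rmult_le_compat_r; [left; apply Rinv_0_lt_compat; lra | lra]. }
  lra.
Qed.

End Gain.

Lemma frate_supporting_line (h P sA2 scov2 m : R) :
  0 <= h * P -> 0 <= sA2 -> 0 < scov2 -> m <= 1 ->
  exists K, forall x, x <= 1 -> frate h P sA2 scov2 x <= frate h P sA2 scov2 m + K * (x - m).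
Proof.
  intros Ha Hb Hc Hm.
  destruct (ln_gain_supporting_line (h * P) sA2 scov2 Ha Hb Hc m Hm) as [K HK].
  assert (Hl2 : 0 < ln 2) by (rewrite <- ln_1; apply ln_increasing; lra).
  exists (K / ln 2). intros x Hx. rewrite !frate_gain.
  replace (ln (gain (h * P) sA2 scov2 m) / ln 2 + K / ln 2 * (x - m))
    with ((ln (gain (h * P) sA2 scov2 m) + K * (x - m)) / ln 2) by (field; lra).
  apply Rmult_le_compat_r; [left; apply Rinv_0_lt_compat; exact Hl2 | exact (HK x Hx)].
Qed.

Theorem proposition1 (h zeta sA2 scov2 : R) (N : nat)
  (hh : 0 < h) (hz : 0 < zeta <= 1) (hA : 0 <= sA2) (hc : 0 < scov2)
  (hN : (1 <= N)%nat) :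
  forall P : R, 0 <= P ->
  forall RQ : R * R, C_DPS N h P zeta sA2 scov2 RQ <-> C_SPS h P zeta sA2 scov2 RQ.
Proof.
  intros P HP RQ. unfold C_DPS, C_SPS. split.
  -
    intros [rho [Hrho [HQ HR]]]. fold (mean N rho) (mean N (fun k => rho k * zeta * h * P))
      (mean N (fun k => frate h P sA2 scov2 (rho k))) in HQ, HR.
    pose proof (mean_in_unit N hN rho Hrho) as Hmu.
    exists (mean N rho). split; [exact Hmu | split].
    + assert (Havg : mean N (fun k => rho k * zeta * h * P) = mean N rho * zeta * h * P).
      { rewrite (mean_ext N _ (fun k => 0 + zeta * h * P * rho k)) by (intros; ring).
        rewrite (mean_affine N hN). ring. }
      lra.
    + destruct (frate_supporting_line h P sA2 scov2 (mean N rho)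
                  ltac:(nra) hA hc ltac:(lra)) as [K HK].
      eapply Rle_trans; [exact HR|].
      apply (mean_le_of_supporting_line N hN (frate h P sA2 scov2) rho K).
      intros k Hk. apply HK. apply Hrho; exact Hk.
  -
    intros [r [Hr [HQ HR]]]. exists (fun _ => r). split; [intros; exact Hr|].
    fold (mean N (fun _ => r * zeta * h * P)) (mean N (fun _ => frate h P sA2 scov2 r)).
    rewrite !(mean_const N hN). split; assumption.
Qed.
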